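(* Let $C$ be little-Sierpiński complete and let $X$ be any $(0=1)$-connected type. Then the restriction map $C^{\sigma_X}\colon C^{\mathsf L(X)}\to C^{X_\bot}$, $g\mapsto g\circ\sigma_X$, has a retraction.
   Context: Work in univalent foundations. Let $\mathbb J$ be a bounded distributive lattice with underlying set $\mathbb I$. Define: - the join $P*X$ for a proposition $P$ as the pushout of $P\leftarrow P\times X\to X$; - a type $X$ to be $P$-connected if $X^P$ is contractible; - the Sierpiński cone $X_\bot:=\sum_{i:\mathbb I}(i=0)*X$; equivalently, $X_\bot$ is the pushout of $1\leftarrow X\xrightarrow{x\mapsto(0,x)}\mathbb I\times X$; - the open partial map classifier $\mathsf L(X):=\sum_{i:\mathbb I}X^{(i=1)}$. For $(0=1)$-connected $X$, with centre $c$ of $X^{(0=1)}$, the comparison map $\sigma_X\colon X_\bot\to\mathsf L(X)$ is induced by the pushout description. It sends the cone point to $(0,c)$ and $(i,x)\in\mathbb I\times X$ to $(i,\lambda\_.x)$, with gluing paths $(0,c)=(0,\lambda\_.x)$ from contractibility of $X^{(0=1)}$. A type $C$ is orthogonal to $m\colon A\to B$ if $C^B\to C^A$ is an equivalence. $C$ is little-Sierpiński complete if it is orthogonal to $\sigma_{(i=1)}\colon(i=1)_\bot\to\mathsf L(i=1)$ for every $i:\mathbb I$. Each $(i=1)$ is $(0=1)$-connected. *)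

(* Univalent-foundations notions rendered in Rocq with the
   identity type [eq]; higher inductive pushouts are given as records with a
   dependent eliminator and (propositional) computation rules. *)
From Stdlib Require Import FunctionalExtensionality.

Set Implicit Arguments.

Definition IsContr (T : Type) : Type := {c : T & forall y : T, c = y}.

Definition IsSet (T : Type) : Prop := forall (x y : T) (p q : x = y), p = q.

Definition IsEquiv {A B : Type} (f : A -> B) : Type :=
  ({g : B -> A & forall x, g (f x) = x} * {h : B -> A & forall y, f (h y) = y})%type.

Definition HasRetraction {A B : Type} (f : A -> B) : Type :=
  {r : B -> A & forall x, r (f x) = x}.

Definition Orthogonal (C : Type) {A B : Type} (m : A -> B) : Type :=
  IsEquiv (fun k : B -> C => fun a : A => k (m a)).

Definition apD {T : Type} {Q : T -> Type} (F : forall t, Q t) {x y : T} (p : x = y)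
  : eq_rect x Q (F x) y p = F y :=
  match p with eq_refl => eq_refl end.

Definition transport_const {T Y : Type} {x y : T} (p : x = y) (q : Y)
  : eq_rect x (fun _ => Y) q y p = q :=
  match p with eq_refl => eq_refl end.

Record BDLattice := {
  carrier :> Type;
  carrier_set : IsSet carrier;
  zero : carrier;
  one : carrier;
  meet : carrier -> carrier -> carrier;
  join : carrier -> carrier -> carrier;
  meetA : forall x y z, meet x (meet y z) = meet (meet x y) z;
  joinA : forall x y z, join x (join y z) = join (join x y) z;
  meetC : forall x y, meet x y = meet y x;
  joinC : forall x y, join x y = join y x;
  meet_absorb : forall x y, meet x (join x y) = x;
  join_absorb : forall x y, join x (meet x y) = x;
  meet_distr : forall x y z, meet x (join y z) = join (meet x y) (meet x z);
  join0 : forall x, join x zero = x;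
  meet1 : forall x, meet x one = x
}.

Record Pushout {A B D : Type} (f : A -> B) (g : A -> D) := {
  po_carrier : Type;
  po_inl : B -> po_carrier;
  po_inr : D -> po_carrier;
  po_glue : forall a, po_inl (f a) = po_inr (g a);
  po_ind : forall (Q : po_carrier -> Type)
             (l : forall b, Q (po_inl b)) (r : forall d, Q (po_inr d)),
             (forall a, eq_rect _ Q (l (f a)) _ (po_glue a) = r (g a)) ->
             forall p, Q p;
  po_beta_l : forall Q l r gl b, po_ind Q l r gl (po_inl b) = l b;
  po_beta_r : forall Q l r gl d, po_ind Q l r gl (po_inr d) = r d;
  po_beta_glue : forall Q l r gl a,
    eq_trans
      (eq_trans
         (eq_sym (f_equal (fun q => eq_rect _ Q q _ (po_glue a))
                          (po_beta_l Q l r gl (f a))))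
         (apD (po_ind Q l r gl) (po_glue a)))
      (po_beta_r Q l r gl (g a))
    = gl a
}.

(** A choice of pushouts for every span (the ambient theory has pushout HITs). *)
Definition PushoutsExist : Type :=
  forall (A B D : Type) (f : A -> B) (g : A -> D), Pushout f g.

Definition po_rec {A B D : Type} {f : A -> B} {g : A -> D} (P : Pushout f g)
  (Y : Type) (l : B -> Y) (r : D -> Y)
  (gl : forall a, l (f a) = r (g a)) : po_carrier P -> Y :=
  po_ind P (fun _ => Y) l r (fun a => eq_trans (transport_const _ _) (gl a)).

Section Cones.
Variable PO : PushoutsExist.
Variable J : BDLattice.

(** X_bot : pushout of 1 <- X -> I x X, x |-> (0,x) *)
Definition SConePO (X : Type) :=
  (PO : PushoutsExist) X unit (carrier J * X)%type (fun _ => tt) (fun x => (zero J, x)).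

Definition SCone (X : Type) : Type := po_carrier (SConePO X).

Definition Lpart (X : Type) : Type := {i : carrier J & i = one J -> X}.

Definition Conn01 (X : Type) : Type := IsContr (zero J = one J -> X).

Definition sigmaMap (X : Type) (h : Conn01 X) : SCone X -> Lpart X :=
  po_rec (SConePO X) (Y := Lpart X)
    (fun _ => existT (fun i => i = one J -> X) (zero J) (projT1 h))
    (fun ix => existT (fun i => i = one J -> X) (fst ix) (fun _ => snd ix))
    (fun x => f_equal (existT (fun i => i = one J -> X) (zero J))
                      (projT2 h (fun _ => x))).

Definition conn_eq1 (i : carrier J) : Conn01 (i = one J).
Proof.
  unshelve econstructor.
  - intro e.
    assert (H1 : join J (one J) (meet J (one J) i) = one J) by apply join_absorb.
    rewrite meetC, meet1 in H1.
    rewrite <- (join0 J i), e, joinC. exact H1.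
  - intro y. apply functional_extensionality. intro e. apply carrier_set.
Defined.

Definition LittleSierpComplete (C : Type) : Type :=
  forall i : carrier J, Orthogonal C (sigmaMap (conn_eq1 i)).

End Cones.

(* The retraction sends f : X_bot -> C to the map (i, u) |-> f' (i, id), where f' : L(i=1) -> C is
   the unique extension along sigma_(i=1) of f composed with the cone map (i=1)_bot -> X_bot induced
   by u.  It is a retraction because sigma is natural in the (0=1)-connected type: sigma_X after the
   cone map of u equals L(u) after sigma_(i=1), and L(u) (i, id) = (i, u).  Naturality needs no
   computation with the gluing paths: they lie over 0 in L(X), whose fibre there is contractible,
   so any two parallel paths between such points agree. *)
From Stdlib Require Import FunctionalExtensionality.

Lemma contr_paths_eq {T : Type} (h : IsContr T) {x y : T} (p q : x = y) : p = q.
Proof.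
  destruct h as [c K].
  assert (canonical : forall (z : T) (r : x = z), r = eq_trans (eq_sym (K x)) (K z)).
  { intros z r. destruct r. destruct (K x). reflexivity. }
  rewrite (canonical _ p), (canonical _ q). reflexivity.
Qed.

Lemma sigT_paths_eq_contr_fiber {I : Type} {P : I -> Type} (hI : IsSet I) {i : I}
  (hP : IsContr (P i)) {a : P i} {y z : sigT P} (e : y = existT P i a) (p q : y = z) :
  p = q.
Proof.
  subst y. destruct q. revert p. apply eq_sigT_rect. intros e r. simpl in e, r.
  assert (He : e = eq_refl) by apply hI. subst e.
  rewrite (contr_paths_eq hP r eq_refl). reflexivity.
Qed.

Lemma eq_rect_eq_fun {T Y : Type} (F G : T -> Y) {x y : T} (e : x = y)
  (q : F x = G x) (r : F y = G y) :
  eq_trans q (f_equal G e) = eq_trans (f_equal F e) r ->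
  eq_rect x (fun t => F t = G t) q y e = r.
Proof.
  destruct e; simpl. intros ->. apply eq_trans_refl_l.
Qed.

Lemma po_eq_pointwise {A B D : Type} {f : A -> B} {g : A -> D} (P : Pushout f g)
  (Y : Type) (F G : po_carrier P -> Y)
  (hl : forall b, F (po_inl P b) = G (po_inl P b))
  (hr : forall d, F (po_inr P d) = G (po_inr P d))
  (hglue : forall a, eq_trans (hl (f a)) (f_equal G (po_glue P a))
                   = eq_trans (f_equal F (po_glue P a)) (hr (g a))) :
  forall p, F p = G p.
Proof.
  apply (po_ind P (fun p => F p = G p) hl hr).
  intro a. apply eq_rect_eq_fun, hglue.
Qed.

Section Functoriality.
Variable PO : PushoutsExist.
Variable J : BDLattice.

Definition SCone_map {A X : Type} (u : A -> X) : SCone PO J A -> SCone PO J X :=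
  po_rec (SConePO PO J A) (Y := SCone PO J X)
    (fun _ => po_inl (SConePO PO J X) tt)
    (fun ia => po_inr (SConePO PO J X) (fst ia, u (snd ia)))
    (fun a => po_glue (SConePO PO J X) (u a)).

Definition Lpart_map {A X : Type} (u : A -> X) (z : Lpart J A) : Lpart J X :=
  existT _ (projT1 z) (fun e => u (projT2 z e)).

Lemma SCone_map_tip {A X : Type} (u : A -> X) :
  SCone_map u (po_inl (SConePO PO J A) tt) = po_inl (SConePO PO J X) tt.
Proof. exact (po_beta_l _ _ _ _ _ tt). Qed.

Lemma SCone_map_base {A X : Type} (u : A -> X) (ia : carrier J * A) :
  SCone_map u (po_inr (SConePO PO J A) ia) = po_inr (SConePO PO J X) (fst ia, u (snd ia)).
Proof. exact (po_beta_r _ _ _ _ _ ia). Qed.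

Lemma sigmaMap_tip {X : Type} (hX : Conn01 J X) :
  sigmaMap PO hX (po_inl (SConePO PO J X) tt)
  = existT (fun i => i = one J -> X) (zero J) (projT1 hX).
Proof. exact (po_beta_l _ _ _ _ _ tt). Qed.

Lemma sigmaMap_base {X : Type} (hX : Conn01 J X) (ix : carrier J * X) :
  sigmaMap PO hX (po_inr (SConePO PO J X) ix)
  = existT (fun i => i = one J -> X) (fst ix) (fun _ => snd ix).
Proof. exact (po_beta_r _ _ _ _ _ ix). Qed.

Lemma sigmaMap_natural {A X : Type} (hA : Conn01 J A) (hX : Conn01 J X) (u : A -> X) :
  forall y, sigmaMap PO hX (SCone_map u y) = Lpart_map u (sigmaMap PO hA y).
Proof.
  assert (tip : sigmaMap PO hX (SCone_map u (po_inl (SConePO PO J A) tt))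
                = existT (fun i => i = one J -> X) (zero J) (projT1 hX)).
  { rewrite SCone_map_tip. apply sigmaMap_tip. }
  unshelve eapply (po_eq_pointwise (SConePO PO J A)).
  - intros [].
    rewrite tip, sigmaMap_tip. unfold Lpart_map; simpl.
    exact (f_equal (existT _ (zero J)) (projT2 hX _)).
  - intro d. rewrite SCone_map_base, !sigmaMap_base. reflexivity.
  - intro a. exact (sigT_paths_eq_contr_fiber (carrier_set J) hX tip _ _).
Qed.

End Functoriality.

Theorem mainTheorem8 (PO : PushoutsExist) (J : BDLattice) (C : Type)
  (HC : LittleSierpComplete PO J C)
  (X : Type) (hX : Conn01 J X) :
  HasRetraction (fun g : Lpart J X -> C =>
                   fun y : SCone PO J X => g (@sigmaMap PO J X hX y)).
Proof.
  exists (fun f z =>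
    projT1 (fst (HC (projT1 z))) (fun y => f (SCone_map PO J (projT2 z) y))
      (existT (fun j => j = one J -> projT1 z = one J) (projT1 z) (fun e => e))).
  intro g. apply functional_extensionality. intros [i u]. simpl.
  transitivity (projT1 (fst (HC i))
                  (fun y => g (Lpart_map J u (sigmaMap PO (conn_eq1 J i) y)))
                  (existT (fun j => j = one J -> i = one J) i (fun e => e))).
  - f_equal. apply functional_extensionality. intro y.
    f_equal. apply sigmaMap_natural.
  - rewrite (projT2 (fst (HC i)) (fun z => g (Lpart_map J u z))). reflexivity.
Qed.
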